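(* Let $(\vec f,\vec\theta,\rho,\vec{\mathcal J})$ be a Definitional SMTO problem over a background theory $T$. (i) Every conjunction $A$ of assumptions generated by $\vec{\mathcal J}$ is $T$-satisfiable when $\vec\theta$ is treated as uninterpreted functions. (ii) The problem cannot be both satisfiable and unsatisfiable. (iii) Suppose $\exists\vec f.\forall\vec\theta.\,A\Rightarrow\rho$ is $T$-satisfiable for a conjunction $A$ of generated assumptions. Then $\exists\vec f.\forall\vec\theta.\,A'\Rightarrow\rho$ is $T$-satisfiable for every conjunction $A'\supseteq A$ of generated assumptions. That is, further oracle calls cannot invalidate a result of ''satisfiable''.
   Context: An oracle interface is a tuple $\mathcal I=(\vec y,\vec z,\alpha_{gen},\beta_{gen})$, where $\vec y$ (the query domain) and $\vec z$ (the response co-domain) are lists of sorted variables, and $\alpha_{gen}$ (the assumption generator) and $\beta_{gen}$ (the constraint generator) are formulas whose free variables are among $\vec y,\vec z$. Each oracle interface has an associated oracle, which on a tuple of values $\vec c$ of the sorts of $\vec y$ returns a tuple of values $\vec d$ of the sorts of $\vec z$. If calling the oracle on $\vec c$ returns $\vec d$, then $\alpha_{gen}\cdot\{\vec y\to\vec c,\vec z\to\vec d\}$ is an assumption generated by $\mathcal I$, and $\beta_{gen}\cdot\{\vec y\to\vec c,\vec z\to\vec d\}$ is a constraint generated by $\mathcal I$. Here $e\cdot\{x\to t\}$ denotes substitution and $\approx$ denotes equality. An SMTO problem is a tuple $(\vec f,\vec\theta,\rho,\vec{\mathcal I})$, where $\vec f$ are ordinary function symbols, $\vec\theta$ are oracle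 function symbols, $\rho$ is a formula in a background theory $T$ whose free function symbols are $\vec f\uplus\vec\theta$, and $\vec{\mathcal I}$ is a set of oracle interfaces. The problem is unsatisfiable if $\exists\vec f.\exists\vec\theta.\,A\wedge\rho\wedge B$ is $T$-unsatisfiable, and it is satisfiable if $\exists\vec f.\forall\vec\theta.\,A\Rightarrow(\rho\wedge B)$ is $T$-satisfiable. In each case $A$ (respectively $B$) is some conjunction of assumptions (respectively constraints) generated by $\vec{\mathcal I}$. An oracle interface $\mathcal J$ defines an oracle function symbol $\theta$ if it has the form $((y_1,\dots,y_j),(z),\ \theta(y_1,\dots,y_j)\approx z,\ \text{true})$ and its associated oracle is functional, i.e. it always returns the same output on the same input. An SMTO problem $(\vec f,\vec\theta,\rho,\vec{\mathcal J})$ is in Definitional SMTO if $\vec\theta=(\theta_1,\dots,\theta_n)$, $\vec{\mathcal J}=(\mathcal J_1,\dots,\mathcal J_n)$, and $\mathcal J_i$ defines $\theta_i$ for every $i$. In particular, all generated constraints are trivially true, so $B$ may be taken to be empty. *)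

From mathcomp Require Import all_boot.
From Stdlib Require List.

Set Implicit Arguments.
Unset Strict Implicit.
Unset Printing Implicit Defensive.

(* A background theory T, presented semantically by its class of models.
   - [tsort]    : the sorts of T;
   - [value s]  : the values of sort s (the things oracles receive / return);
   - [model]   : the T-models;
   - [dom M s] : the (nonempty) carrier of sort s in the model M;
   - [valI]    : interpretation of values in a model; distinct values denote
                 distinct elements (as for numerals, constructors, ...). *)
Record theory := Theory {
  tsort : Type;
  value : tsort -> Type;
  model : Type;
  dom : model -> tsort -> Type;
  dom_inhabited : forall (M : model) (s : tsort), dom M s;
  valI : forall (M : model) (s : tsort), value s -> dom M s;
  valI_inj : forall (M : model) (s : tsort), injective (@valI M s)
}.

Fixpoint tup (S : Type) (D : S -> Type) (l : seq S) : Type :=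
  match l with
  | [::] => unit
  | s :: l' => (D s * tup D l')%type
  end.

Fixpoint tmap (S : Type) (D E : S -> Type) (g : forall s, D s -> E s)
  (l : seq S) : tup D l -> tup E l :=
  match l with
  | [::] => fun _ => tt
  | s :: l' => fun x => (g s x.1, tmap g x.2)
  end.

Section Syntax.
Variable T : theory.

Definition fsig := (seq (tsort T) * tsort T)%type.

Definition finterp (M : model T) (I : Type) (sg : I -> fsig) :=
  forall i : I, tup (dom M) (sg i).1 -> dom M (sg i).2.

Variables (m n : nat) (sf : 'I_m -> fsig) (st : 'I_n -> fsig).

(* A formula whose free function symbols are among f (signatures sf) and
   theta (signatures st), given by its truth value in every T-model under
   every interpretation of f and theta. *)
Definition formula :=
  forall M : model T, finterp M sf -> finterp M st -> Prop.

(* A formula with additional free variables of sorts ys (query) and zs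
   (response). *)
Definition oformula (ys zs : seq (tsort T)) :=
  forall M : model T, finterp M sf -> finterp M st ->
    tup (dom M) ys -> tup (dom M) zs -> Prop.

(* An oracle interface (y, z, alpha_gen, beta_gen) with its oracle; the oracle
   is a relation "on query c it may return d". *)
Record interface := Interface {
  qdom : seq (tsort T);
  rdom : seq (tsort T);
  agen : oformula qdom rdom;
  bgen : oformula qdom rdom;
  oracle : tup (@value T) qdom -> tup (@value T) rdom -> Prop
}.

Definition functional_oracle (J : interface) :=
  forall c d d', @oracle J c d -> @oracle J c d' -> d = d'.

Definition def_interface (i : 'I_n)
    (orc : tup (@value T) (st i).1 -> tup (@value T) [:: (st i).2] -> Prop) :
    interface :=
  @Interface (st i).1 [:: (st i).2]
    (fun M F Th y z => Th i y = z.1)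
    (fun _ _ _ _ _ => True)
    orc.

Variables (rho : formula) (k : nat) (Is : 'I_k -> interface).

(* One oracle call: an interface, a query c and a response d of its oracle.
   It generates the assumption alpha_gen{y->c,z->d} and the constraint
   beta_gen{y->c,z->d}. *)
Record call := Call {
  c_idx : 'I_k;
  c_q : tup (@value T) (qdom (Is c_idx));
  c_r : tup (@value T) (rdom (Is c_idx));
  c_ok : @oracle (Is c_idx) c_q c_r
}.

(* A conjunction of generated assumptions (resp. constraints) is given by a
   finite list of oracle calls. *)
Definition holdsA (A : seq call) (M : model T) (F : finterp M sf)
    (Th : finterp M st) : Prop :=
  forall c, List.In c A ->
    @agen (Is (c_idx c)) M F Th (tmap (@valI T M) (c_q c))
                             (tmap (@valI T M) (c_r c)).

Definition holdsB (B : seq call) (M : model T) (F : finterp M sf)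
    (Th : finterp M st) : Prop :=
  forall c, List.In c B ->
    @bgen (Is (c_idx c)) M F Th (tmap (@valI T M) (c_q c))
                             (tmap (@valI T M) (c_r c)).

Definition smto_unsat : Prop :=
  exists A B : seq call,
    ~ (exists (M : model T) (F : finterp M sf) (Th : finterp M st),
          holdsA A F Th /\ rho F Th /\ holdsB B F Th).

Definition smto_sat : Prop :=
  exists A B : seq call,
    exists (M : model T) (F : finterp M sf),
      forall Th : finterp M st, holdsA A F Th -> rho F Th /\ holdsB B F Th.

End Syntax.

(* The key observation is that, when every oracle function symbol theta_i is
   defined by a functional oracle, every T-model M carries a single
   interpretation of the theta_i -- the oracle graph itself, extended
   arbitrarily off the queried points -- that satisfies EVERY assumption the
   interfaces can generate.  Injectivity of the interpretation of values is
   what makes this graph a function: two queries with the same image in M are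
   the same query, hence (by functionality) have the same response.

   The three parts of the theorem
   then follow: (i) is the witness in any model, (ii) combines it with the
   fact that definitional interfaces only generate trivial constraints, and
   (iii) is antitonicity. *)

From mathcomp Require Import all_boot.
From Stdlib Require List.
From Stdlib Require Import ClassicalEpsilon.

Lemma tmap_inj {S : Type} {D E : S -> Type} {g : forall s, D s -> E s}
    (g_inj : forall s, injective (g s)) {l : seq S} :
  injective (@tmap S D E g l).
Proof.
elim: l => [|s l IH] /=; first by move=> [] [].
by move=> [a x] [b y] /= [] /g_inj -> /IH ->.
Qed.

Definition default_finterp {T : theory} (M : model T) {I : Type}
    (sg : I -> fsig T) : finterp M sg :=
  fun i _ => dom_inhabited M (sg i).2.

Section GeneralSMTO.
Variables (T : theory) (m n : nat) (sf : 'I_m -> fsig T) (st : 'I_n -> fsig T).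
Variables (rho : formula sf st) (k : nat) (Is : 'I_k -> interface sf st).

Lemma holdsA_incl (A A' : seq (call Is)) (M : model T) (F : finterp M sf)
    (Th : finterp M st) :
  List.incl A A' -> holdsA A' F Th -> holdsA A F Th.
Proof. by move=> AA' HA' c /AA'; apply: HA'. Qed.

(* If every model and interpretation of f extends to an interpretation of
   theta satisfying all generated assumptions and constraints, the problem
   cannot be both satisfiable and unsatisfiable: the satisfiability witness,
   completed by that theta, models every A /\ rho /\ B. *)
Lemma sat_unsat_incompatible :
  (forall (M : model T) (F : finterp M sf), exists Th : finterp M st,
     forall A B : seq (call Is), holdsA A F Th /\ holdsB B F Th) ->
  ~ (smto_sat rho Is /\ smto_unsat rho Is).
Proof.
move=> witness [[A [B [M [F sat]]]] [A' [B' unsat]]].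
have [Th allTh] := witness M F.
apply: unsat; exists M, F, Th; split; first exact: (allTh A' B').1.
by split; [exact: (sat Th (allTh A B).1).1 | exact: (allTh A B').2].
Qed.

End GeneralSMTO.

Arguments holdsA_incl {T m n sf st k Is A A' M F Th}.
Arguments sat_unsat_incompatible {T m n sf st rho k Is}.

Section Definitional.
Variables (T : theory) (m n : nat) (sf : 'I_m -> fsig T) (st : 'I_n -> fsig T).
Variable orc : forall i : 'I_n,
  tup (@value T) (st i).1 -> tup (@value T) [:: (st i).2] -> Prop.
Hypothesis orc_fun : forall i : 'I_n, functional_oracle (def_interface sf (orc i)).

Let Is (i : 'I_n) : interface sf st := def_interface sf (orc i).

(* The oracle graph read in the model M: theta_i(y) is the (image of the)
   response to a query whose image is y, if there is one. *)
Definition oracle_interp (M : model T) : finterp M st := fun i y =>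
  epsilon (inhabits (dom_inhabited M (st i).2)) (fun v =>
    exists q d, orc i q d /\ tmap (@valI T M) q = y /\ (tmap (@valI T M) d).1 = v).

Lemma oracle_interp_call (M : model T) i q d : orc i q d ->
  oracle_interp M i (tmap (@valI T M) q) = (tmap (@valI T M) d).1.
Proof.
move=> qd; rewrite /oracle_interp.
set P := fun v => exists q' d', orc i q' d' /\ _ /\ _ = v.
have answered : exists v, P v by exists (tmap (@valI T M) d).1, q, d.
have [q' [d' [q'd' [q'q <-]]]] :=
  epsilon_spec (inhabits (dom_inhabited M (st i).2)) P answered.
have same_query : q' = q := tmap_inj (@valI_inj T M) _ _ q'q.
by rewrite same_query in q'd'; rewrite (orc_fun i _ _ _ q'd' qd).
Qed.

Lemma oracle_interp_holdsA (M : model T) (F : finterp M sf) (A : seq (call Is)) :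
  holdsA A F (oracle_interp M).
Proof. by move=> [i q d qd] _; apply: oracle_interp_call. Qed.

Lemma def_holdsB (M : model T) (F : finterp M sf) (Th : finterp M st)
    (B : seq (call Is)) : holdsB B F Th.
Proof. by []. Qed.

End Definitional.

Arguments oracle_interp {T n st} orc M.
Arguments oracle_interp_holdsA {T m n sf st orc} orc_fun M F A.
Arguments def_holdsB {T m n sf st orc M F Th B}.

Theorem mainTheorem2 (T : theory) (HT : inhabited (model T))
  (m n : nat) (sf : 'I_m -> fsig T) (st : 'I_n -> fsig T)
  (rho : formula sf st)
  (orc : forall i : 'I_n,
           tup (@value T) (st i).1 -> tup (@value T) [:: (st i).2] -> Prop)
  (Hfun : forall i : 'I_n, functional_oracle (def_interface sf (orc i))) :
  let Is := fun i : 'I_n => def_interface sf (orc i) in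
  (* (i) *)
  (forall A : seq (call Is),
     exists (M : model T) (F : finterp M sf) (Th : finterp M st),
       holdsA A F Th) /\
  (* (ii) *)
  ~ (smto_sat rho Is /\ smto_unsat rho Is) /\
  (* (iii) *)
  (forall A : seq (call Is),
     (exists (M : model T) (F : finterp M sf),
        forall Th : finterp M st, holdsA A F Th -> rho M F Th) ->
     forall A' : seq (call Is), List.incl A A' ->
     exists (M : model T) (F : finterp M sf),
        forall Th : finterp M st, holdsA A' F Th -> rho M F Th).
Proof.
move=> Is; have [M0] := HT.
split.
  move=> A; exists M0, (default_finterp M0 sf), (oracle_interp orc M0).
  exact: oracle_interp_holdsA.
split.
  apply: sat_unsat_incompatible => M F; exists (oracle_interp orc M) => A B.
  by split; [apply: oracle_interp_holdsA | apply: def_holdsB].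
move=> A [M [F sat]] A' AA'; exists M, F => Th HA'.
exact: sat Th (holdsA_incl AA' HA').
Qed.
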